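(* Let $k\ge2$, $n=2^k-1$. The binary simplex $(n,k)$ code has the Easy Repair Property.
   Context: The binary simplex $(n,k)$ code has generator matrix $G\in\mathbb F_2^{k\times n}$ whose columns $g_1,\dots,g_n$ are all the distinct nonzero vectors of $\mathbb F_2^k$. Nodes are coordinates $c_1,\dots,c_n$ of codewords $c=uG$. An erasure pattern is a set $S^e$ of erased nodes; the others are live. It is correctable if no two distinct codewords coincide on all live positions. A node $c_i$ is related to distinct nodes $c_{j_1},\dots,c_{j_\gamma}$ (all different from $c_i$) if $g_i=g_{j_1}+\dots+g_{j_\gamma}$. An erased node allows for easy repair if it is related to $\gamma\le2$ live nodes. An erasure pattern allows for easy repair if all erased nodes can be recovered by a sequence of easy repairs, where after each step the recovered node is regarded as live. A code has the Easy Repair Property if every correctable erasure pattern allows for easy repair. *)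

From mathcomp Require Import all_boot all_algebra.
Set Implicit Arguments. Unset Strict Implicit. Unset Printing Implicit Defensive.
Import GRing.Theory.
Local Open Scope ring_scope.

(* A binary linear code given by a generator matrix G : 'M['F_2]_(k, n).
   Nodes are the coordinates 'I_n; the codeword of message u is u *m G. *)

(* G is a generator matrix of the binary simplex (2^k-1, k) code:
   its columns are pairwise distinct and nonzero (hence, as n = 2^k - 1,
   they are exactly all nonzero vectors of F_2^k). *)
Definition simplex_gen (k n : nat) (G : 'M['F_2]_(k, n)) : Prop :=
  n = (2 ^ k - 1)%N /\
  (forall i, col i G != 0) /\
  (forall i j, col i G = col j G -> i = j).

Definition correctable (k n : nat) (G : 'M['F_2]_(k, n)) (S : {set 'I_n}) :=
  forall u v : 'rV['F_2]_k,
    (forall i, i \notin S -> (u *m G) 0 i = (v *m G) 0 i) ->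
    u *m G = v *m G.

Definition easy_node (k n : nat) (G : 'M['F_2]_(k, n)) (L : {set 'I_n})
  (i : 'I_n) : Prop :=
  (exists j, [/\ j \in L, j != i & col i G = col j G]) \/
  (exists j1 j2, [/\ j1 \in L, j2 \in L, j1 != j2, j1 != i & j2 != i] /\
                     col i G = col j1 G + col j2 G).

Fixpoint easy_seq (k n : nat) (G : 'M['F_2]_(k, n)) (L : {set 'I_n})
  (s : seq 'I_n) : Prop :=
  match s with
  | [::] => True
  | i :: s' => easy_node G L i /\ easy_seq G (i |: L) s'
  end.

Definition allows_easy_repair (k n : nat) (G : 'M['F_2]_(k, n))
  (S : {set 'I_n}) : Prop :=
  exists s : seq 'I_n,
    [/\ all (fun i => i \in S) s, {subset S <= s} & easy_seq G (~: S) s].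

Definition easy_repair_property (k n : nat) (G : 'M['F_2]_(k, n)) : Prop :=
  forall S : {set 'I_n}, correctable G S -> allows_easy_repair G S.

From mathcomp Require Import all_boot all_algebra.
From Stdlib Require Import Classical.
Set Implicit Arguments. Unset Strict Implicit. Unset Printing Implicit Defensive.
Import GRing.Theory.
Local Open Scope ring_scope.

(* Repairs are performed one node at a time, so it suffices that every nonempty
   correctable erasure pattern S contains an erased node with an easy repair:
   S minus that node is still correctable.  If no erased node is easy, then for
   live a <> b the node carrying g_a + g_b (which exists, the columns being all
   nonzero vectors) is live, so the live columns together with 0 form a
   subspace W.  An erased column is nonzero and distinct from the live ones,
   hence outside W, and a linear form vanishing on W but not on it is a
   nonzero codeword supported on S: S is not correctable. *)

Lemma F2_cases (c : 'F_2) : c = 0 \/ c = 1.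
Proof. by case: c => [[|[|?]]] // ?; [left | right]; apply: val_inj. Qed.

Lemma F2_mx_addxx m n (A : 'M['F_2]_(m, n)) : A + A = 0.
Proof.
by rewrite -[A]scale1r -scalerDl (addrr_pchar2 (pchar_Fp (isT : prime 2))) scale0r.
Qed.

Lemma F2_submx_closed k m (P : pred 'rV['F_2]_k) (B : 'M_(m, k)) :
  P 0 -> (forall x y, P x -> P y -> P (x + y)) -> (forall i, P (row i B)) ->
  forall x, (x <= B)%MS -> P x.
Proof.
move=> P0 PD PB x /submxP [D ->]; rewrite mulmx_sum_row.
apply: (big_ind P) => // i _.
by case: (F2_cases (D 0 i)) => ->; rewrite ?scale0r ?scale1r.
Qed.

Lemma submx_separation (F : fieldType) m n (B : 'M[F]_(m, n)) (x : 'rV_n) :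
  ~~ (x <= B)%MS -> exists v : 'cV_n, B *m v = 0 /\ x *m v != 0.
Proof.
rewrite submxE => xB.
have [j xBj] : exists j, (x *m cokermx B) 0 j != 0.
  apply/existsP; apply: contraNT xB => /existsPn xB0.
  by apply/eqP/rowP => j; have /negPn/eqP -> := xB0 j; rewrite mxE.
exists (cokermx B *m delta_mx j 0).
rewrite (mulmxA B) (mulmxA x) mulmx_coker mul0mx.
split=> //; apply: contraNneq xBj.
by rewrite -colE => /colP /(_ 0); rewrite !mxE => ->.
Qed.

Lemma simplex_col_surj k n (G : 'M['F_2]_(k, n)) :
  simplex_gen G -> forall x : 'cV_k, x != 0 -> exists i, col i G = x.
Proof.
case=> n_eq [col_neq0 col_inj] x x_neq0.
pose C := [set col i G | i : 'I_n].
have sub_C : C \subset [set~ 0].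
  by apply/subsetP => _ /imsetP [i _ ->]; rewrite !inE col_neq0.
have card_C : #|C| = n by rewrite card_imset ?card_ord //; exact: col_inj.
have card_neq0 : #|[set~ (0 : 'cV['F_2]_k)]| = n.
  by rewrite cardsC1 card_mx card_Fp // muln1 n_eq subn1.
have /eqP C_eq : C == [set~ 0] by rewrite eqEcard sub_C card_C card_neq0 leqnn.
have : x \in C by rewrite C_eq !inE.
by case/imsetP => i _ ->; exists i.
Qed.

Lemma correctable_subset k n (G : 'M['F_2]_(k, n)) (S S' : {set 'I_n}) :
  correctable G S -> S' \subset S -> correctable G S'.
Proof.
move=> corrS sub u v eq_live; apply: corrS => i iNS; apply: eq_live.
by apply: contra iNS; apply: (subsetP sub).
Qed.

Definition live_rows (R : nmodType) k n (G : 'M[R]_(k, n)) (L : {set 'I_n}) :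
  'M[R]_(n, k) := \matrix_(i < n) (if i \in L then (col i G)^T else 0).

Lemma correctable_col_sub_live k n (G : 'M['F_2]_(k, n)) (S : {set 'I_n}) :
  correctable G S -> forall i, ((col i G)^T <= live_rows G (~: S))%MS.
Proof.
move=> corrS i; apply: contraT => /submx_separation [v [live_v0 col_v_neq0]].
have codeword_v j : (v^T *m G) 0 j = ((col j G)^T *m v) 0 0.
  by rewrite !mxE; apply: eq_bigr => l _; rewrite !mxE mulrC.
have : v^T *m G = 0 *m G.
  apply: corrS => j jNS; rewrite codeword_v mul0mx [RHS]mxE.
  have := congr1 (row j) live_v0; rewrite row_mul rowK inE jNS row0.
  by move=> /rowP /(_ 0); rewrite [RHS]mxE.
move=> /rowP /(_ i); rewrite codeword_v mul0mx [RHS]mxE => col_v0.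
by move: col_v_neq0; rewrite [_ *m v]mx11_scalar col_v0 raddf0 eqxx.
Qed.

Definition live_sum_closed k n (G : 'M['F_2]_(k, n)) (L : {set 'I_n}) :=
  forall a b, a \in L -> b \in L -> a != b ->
  exists2 c, c \in L & col c G = col a G + col b G.

Lemma live_sum_closed_span k n (G : 'M['F_2]_(k, n)) (L : {set 'I_n}) :
  live_sum_closed G L -> forall x, (x <= live_rows G L)%MS ->
  x = 0 \/ exists2 j, j \in L & x = (col j G)^T.
Proof.
move=> closed x.
pose P (y : 'rV_k) := (y == 0) || [exists j in L, y == (col j G)^T].
have P0 : P 0 by rewrite /P eqxx.
have PD y z : P y -> P z -> P (y + z).
  case/orP => [/eqP -> | /exists_inP [a aL /eqP ->]]; first by rewrite add0r.
  case/orP => [/eqP -> | /exists_inP [b bL /eqP ->]].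
    by rewrite addr0 /P; apply/orP; right; apply/exists_inP; exists a.
  have [<- | ab] := eqVneq a b; first by rewrite F2_mx_addxx.
  have [c cL col_c] := closed a b aL bL ab.
  by apply/orP; right; apply/exists_inP; exists c; rewrite // col_c linearD.
have Prow i : P (row i (live_rows G L)).
  by rewrite rowK; case: ifP => // iL; apply/orP; right; apply/exists_inP; exists i.
move=> /(F2_submx_closed P0 PD Prow).
by case/orP => [/eqP | /exists_inP [j jL /eqP]]; [left | right; exists j].
Qed.

Lemma live_sum_closed_correctable_set0 k n (G : 'M['F_2]_(k, n)) (S : {set 'I_n}) :
  (forall i, col i G != 0) -> injective (fun i => col i G) ->
  correctable G S -> live_sum_closed G (~: S) -> S = set0.
Proof.
move=> col_neq0 col_inj corrS closed.
apply/setP => i; rewrite inE; apply/negP => iS.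
have [/eqP | [j jNS /trmx_inj col_ij]] :=
  live_sum_closed_span closed (correctable_col_sub_live corrS i).
  by rewrite -trmx0 (inj_eq trmx_inj) (negPf (col_neq0 i)).
by move: jNS; rewrite -(col_inj _ _ col_ij) inE iS.
Qed.

Lemma live_sum_closed_of_no_easy_node k n (G : 'M['F_2]_(k, n)) (S : {set 'I_n}) :
  simplex_gen G -> (forall i, i \in S -> ~ easy_node G (~: S) i) ->
  live_sum_closed G (~: S).
Proof.
move=> simplexG no_easy a b aL bL ab.
have [_ [_ col_inj]] := simplexG.
have sum_neq0 : col a G + col b G != 0.
  apply: contraNneq ab => sum0; apply/eqP/col_inj.
  by rewrite -[col a G]addr0 -(F2_mx_addxx (col b G)) addrA sum0 add0r.
have [c col_c] := simplex_col_surj simplexG sum_neq0.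
exists c => //; rewrite inE; apply/negP => cS; apply: (no_easy c cS).
right; exists a, b; split=> //; split=> //;
  by apply: contraTneq cS => <-; rewrite -in_setC.
Qed.

Lemma exists_easy_node k n (G : 'M['F_2]_(k, n)) (S : {set 'I_n}) :
  simplex_gen G -> correctable G S -> S != set0 ->
  exists2 i, i \in S & easy_node G (~: S) i.
Proof.
move=> simplexG corrS S_neq0; apply: NNPP => no_easy.
have [_ [col_neq0 col_inj]] := simplexG.
have closed : live_sum_closed G (~: S).
  apply: live_sum_closed_of_no_easy_node => // i iS easy_i.
  exact: no_easy (ex_intro2 _ _ i iS easy_i).
have S0 := live_sum_closed_correctable_set0 col_neq0 col_inj corrS closed.
by rewrite S0 eqxx in S_neq0.
Qed.

Lemma easy_repair_property_of_easy_nodes k n (G : 'M['F_2]_(k, n)) :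
  (forall S, correctable G S -> S != set0 ->
     exists2 i, i \in S & easy_node G (~: S) i) ->
  easy_repair_property G.
Proof.
move=> easy S; have [m] := ubnP #|S|; elim: m S => // m IH S card_S corrS.
have [-> | S_neq0] := eqVneq S set0.
  by exists [::]; split=> // i; rewrite inE.
have [i iS easy_i] := easy S corrS S_neq0.
have card_Si : (#|S :\ i| < m)%N by move: card_S; rewrite (cardsD1 i S) iS.
have corr_Si := correctable_subset corrS (subD1set S i).
have [s [s_sub sub_s repair_s]] := IH _ card_Si corr_Si.
exists (i :: s); split.
- by rewrite /= iS; apply: sub_all s_sub => j; rewrite inE => /andP [].
- move=> j jS; rewrite inE; have [// | ji] := eqVneq j i.
  by rewrite sub_s // !inE ji.
- by split=> //; rewrite setCD setUC in repair_s.
Qed.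

Theorem theorem3p2 (k n : nat) (G : 'M['F_2]_(k, n)) :
  (2 <= k)%N -> simplex_gen G -> easy_repair_property G.
Proof.
move=> _ simplexG; apply: easy_repair_property_of_easy_nodes => S.
exact: exists_easy_node.
Qed.
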